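(* Let $n\ge 3$, let $a<b<c$ be elements of $\mathcal{C}_n$ and let $k$ be an integer with $n-c\le k\le n-b-1$. Then the semiring $\mathcal{L}^{k}_{c}\left(\triangle^{(n)}\{a,b,c\}\right)=\{a_ib_{n-k-i}c_k:\ 0\le i\le n-k\}$ is isomorphic to the string $\mathcal{STR}^{(n-k)}\{a,b\}$.
   Context: For $N\ge1$, $\mathcal{C}_N=\{0,1,\dots,N-1\}$ with its usual order; $\widehat{\mathcal{E}}_{\mathcal{C}_N}$ is the set of all order-preserving maps $\mathcal{C}_N\to\mathcal{C}_N$ (not required to fix $0$), a semiring with $(\alpha+\beta)(x)=\max(\alpha(x),\beta(x))$ and $(\alpha\cdot\beta)(x)=\beta(\alpha(x))$. The notation $a_ib_\ell c_k$ (with $i+\ell+k=N$) denotes the map sending $0,\dots,i-1$ to $a$, the next $\ell$ elements to $b$ and the last $k$ to $c$. The triangle $\triangle^{(n)}\{a,b,c\}$ is the set of $\alpha\in\widehat{\mathcal{E}}_{\mathcal{C}_n}$ with image in $\{a,b,c\}$; its layer $\mathcal{L}^{k}_{c}$ is the set of elements mapping exactly $k$ elements to $c$ (a subsemiring for $n-c\le k\le n-b-1$). For $x<y$ in $\mathcal{C}_N$, the string $\mathcal{STR}^{(N)}\{x,y\}$ is the subsemiring of maps in $\widehat{\mathcal{E}}_{\mathcal{C}_N}$ with image in $\{x,y\}$. Isomorphism means semiring isomorphism. *)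

From mathcomp Require Import all_boot.
Unset Implicit Arguments.

Definition Emap (N : nat) := {ffun 'I_N -> 'I_N}.

Definition order_preserving (N : nat) (f : Emap N) : Prop :=
  forall x y : 'I_N, x <= y -> f x <= f y.
Arguments order_preserving {N} f.

Definition eadd (N : nat) (al be : Emap N) : Emap N :=
  [ffun x => if al x <= be x then be x else al x].
Arguments eadd {N} al be.

Definition emul (N : nat) (al be : Emap N) : Emap N :=
  [ffun x => be (al x)].
Arguments emul {N} al be.

Definition triangle (n a b c : nat) (f : Emap n) : Prop :=
  order_preserving f /\ forall x, (f x : nat) = a \/ (f x : nat) = b \/ (f x : nat) = c.

Definition layer (n c k : nat) (S : Emap n -> Prop) (f : Emap n) : Prop :=
  S f /\ #|[set x | (f x : nat) == c]| = k.

Definition STR (N x y : nat) (f : Emap N) : Prop :=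
  order_preserving f /\ forall z, (f z : nat) = x \/ (f z : nat) = y.

Definition is_abc (n a i b l c : nat) (f : Emap n) : Prop :=
  forall x : 'I_n, (f x : nat) = (if x < i then a else if x < i + l then b else c).

Definition semiring_iso (n m : nat) (S : Emap n -> Prop) (T : Emap m -> Prop)
    (phi : Emap n -> Emap m) : Prop :=
  (forall f, S f -> T (phi f)) /\
  (forall f g, S f -> S g -> phi f = phi g -> f = g) /\
  (forall h, T h -> exists f, S f /\ phi f = h) /\
  (forall f g, S f -> S g -> phi (eadd f g) = eadd (phi f) (phi g)) /\
  (forall f g, S f -> S g -> phi (emul f g) = emul (phi f) (phi g)).

Definition semiring_isomorphic (n m : nat) (S : Emap n -> Prop) (T : Emap m -> Prop) : Prop :=
  exists phi, semiring_iso n m S T phi.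

From mathcomp Require Import all_boot zify.

(* A map in the layer sends exactly k points to its top value c, and since it is
   order preserving these are the last k points of C_n; the first n - k points go to
   a or b, which lie below n - k.  Hence restriction to C_(n-k) is a bijection from the
   layer onto the {a,b}-valued order-preserving maps of C_(n-k), inverted by extending
   with the constant c.  Because c is at least n - k, that extension commutes with
   pointwise maxima and with composition, so restriction is a semiring isomorphism. *)

Lemma card_ord_lt n m : m <= n -> #|[pred x : 'I_n | x < m]| = m.
Proof. by move=> le_mn; rewrite -sum1_card (big_ord_narrow le_mn) sum1_card card_ord. Qed.

Lemma down_closed_ord {n} {P : pred 'I_n} :
  (forall x y : 'I_n, x <= y -> P y -> P x) -> forall x : 'I_n, P x = (x < #|P|).
Proof.
move=> downP x; apply/idP/idP => [Px | ltx].
  have: [pred y : 'I_n | y < x.+1] \subset P.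
    by apply/subsetP => y; rewrite inE ltnS => /downP; apply.
  by move/subset_leq_card; rewrite card_ord_lt.
apply: contraTT ltx => nPx; rewrite -leqNgt.
have: P \subset [pred y : 'I_n | y < x].
  by apply/subsetP => y Py; rewrite inE /= ltnNge; apply: contra nPx => /downP; apply.
by move/subset_leq_card; rewrite card_ord_lt // ltnW.
Qed.

Section Extension.

Variables (n m : nat) (c : 'I_n).
Hypotheses (le_mn : m <= n) (le_mc : m <= c).

Local Notation widen := (widen_ord le_mn).

Definition extend (h : Emap m) : Emap n :=
  [ffun x => oapp (fun y => widen (h y)) c (insub (val x))].

(* The default [x] of [insubd] is never used when [f] is [padded]. *)
Definition restr (f : Emap n) : Emap m := [ffun x => insubd x (val (f (widen x)))].

Definition padded (f : Emap n) : Prop :=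
  forall x : 'I_n, if x < m then f x < m else (f x : nat) == c.

Lemma extend_widen h x : extend h (widen x) = widen (h x).
Proof. by rewrite ffunE /= valK. Qed.

Lemma extend_ge h (x : 'I_n) : m <= x -> extend h x = c.
Proof. by move=> le_mx; rewrite ffunE insubN // -leqNgt. Qed.

Lemma padded_extend h : padded (extend h).
Proof.
move=> x; case: ltnP => [lt_xm | le_mx]; last by rewrite extend_ge.
have -> : x = widen (Ordinal lt_xm) by apply: val_inj.
by rewrite extend_widen /=.
Qed.

Lemma extendK : cancel extend restr.
Proof. by move=> h; apply/ffunP => x; rewrite ffunE extend_widen valKd. Qed.

Lemma restrK f : padded f -> extend (restr f) = f.
Proof.
move=> padf; apply/ffunP => x; have := padf x.
case: ltnP => [lt_xm | le_mx /eqP fxc]; last first.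
  by rewrite extend_ge //; apply: ord_inj; rewrite fxc.
have -> : x = widen (Ordinal lt_xm) by apply: val_inj.
by move=> lt_fxm; rewrite extend_widen; apply: val_inj; rewrite /= ffunE val_insubd lt_fxm.
Qed.

Lemma extend_eadd p q : extend (eadd p q) = eadd (extend p) (extend q).
Proof.
apply/ffunP => x; rewrite [RHS]ffunE; case: (ltnP x m) => [lt_xm | le_mx].
  have -> : x = widen (Ordinal lt_xm) by apply: val_inj.
  by rewrite !extend_widen ffunE; case: ifP.
by rewrite !extend_ge // leqnn.
Qed.

Lemma extend_emul p q : extend (emul p q) = emul (extend p) (extend q).
Proof.
apply/ffunP => x; rewrite [RHS]ffunE; case: (ltnP x m) => [lt_xm | le_mx].
  have -> : x = widen (Ordinal lt_xm) by apply: val_inj.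
  by rewrite !extend_widen ffunE.
by rewrite !extend_ge.
Qed.

Lemma extend_le h x : extend h x <= c.
Proof.
have := padded_extend h x; case: ifP => _ => [lt_hxm | /eqP -> //].
exact: leq_trans (ltnW lt_hxm) le_mc.
Qed.

Lemma order_preserving_extend h : order_preserving (extend h) <-> order_preserving h.
Proof.
split=> oph x y le_xy; first by have := oph (widen x) (widen y) le_xy; rewrite !extend_widen.
case: (ltnP y m) => [lt_ym | le_my]; last by rewrite (extend_ge _ _ le_my) extend_le.
have lt_xm := leq_ltn_trans le_xy lt_ym.
have -> : x = widen (Ordinal lt_xm) by apply: val_inj.
have -> : y = widen (Ordinal lt_ym) by apply: val_inj.
by rewrite !extend_widen; apply: oph.
Qed.

Lemma card_padded f : padded f -> #|[set x | (f x : nat) == c]| = n - m.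
Proof.
move=> padf; have {padf}fxc x : ((f x : nat) == c) = ~~ (x < m).
  have := padf x; case: ltnP => _ // lt_fxm.
  by apply: negbTE; apply: contraTneq lt_fxm => ->; rewrite -leqNgt.
rewrite (eq_card (B := [predC [pred x : 'I_n | x < m]])) => [|x]; last by rewrite !inE fxc.
apply/eqP; rewrite -(eqn_add2l m) -{1}(card_ord_lt n m le_mn) cardC card_ord subnKC //.
Qed.

Lemma restr_semiring_iso (S : Emap n -> Prop) (T : Emap m -> Prop) :
  (forall f, S f -> padded f) -> (forall h, S (extend h) <-> T h) ->
  semiring_iso n m S T restr.
Proof.
move=> Spadded S_extend.
have restrK_S f : S f -> extend (restr f) = f by move/Spadded/restrK.
do !split.
- by move=> f Sf; apply/S_extend; rewrite restrK_S.
- by move=> f g Sf Sg eq_fg; rewrite -(restrK_S f) // -(restrK_S g) // eq_fg.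
- by move=> h Th; exists (extend h); split; [apply/S_extend | exact: extendK].
- move=> f g /restrK_S {1}<- /restrK_S {1}<-.
  by rewrite -extend_eadd extendK.
- move=> f g /restrK_S {1}<- /restrK_S {1}<-.
  by rewrite -extend_emul extendK.
Qed.

End Extension.

Lemma STR_step {N a b} (h : Emap N) : a < b ->
  STR N a b h <-> exists2 i, i <= N & forall x : 'I_N, (h x : nat) = if x < i then a else b.
Proof.
move=> lt_ab; split=> [[oph hab] | [i _ hi]].
  pose Pa := [pred x : 'I_N | (h x : nat) == a].
  have downPa (x y : 'I_N) : x <= y -> Pa y -> Pa x.
    move=> /oph le_hxy /eqP hya; apply/eqP; move: le_hxy; rewrite hya.
    by case: (hab x) => -> //; rewrite leqNgt lt_ab.
  exists #|Pa|; first by rewrite -[N in _ <= N]card_ord max_card.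
  move=> x; rewrite -(down_closed_ord downPa) inE /=.
  by case: (hab x) => ->; rewrite ?eqxx // gtn_eqF.
split=> [x y le_xy | x]; last by rewrite hi; case: ifP; [left | right].
rewrite !hi; case: (ltnP x i) => [_ | le_ix]; first by case: ifP => // _; apply: ltnW.
by rewrite ltnNge (leq_trans le_ix le_xy).
Qed.

Arguments extend {n m} c le_mn h.
Arguments restr {n m} le_mn f.
Arguments padded {n} m c f.
Arguments padded_extend {n m c} le_mn h.
Arguments restrK {n m c} le_mn {f}.
Arguments order_preserving_extend {n m c le_mn} le_mc h.
Arguments card_padded {n m c} le_mn le_mc {f}.
Arguments restr_semiring_iso {n m c} le_mn le_mc {S T}.

Section Layer.

Variables (n a b c k : nat).
Hypotheses (lt_ab : a < b) (lt_bc : b < c) (lt_cn : c < n).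
Hypotheses (le_k : n - c <= k) (lt_k : k <= n - b - 1).

Local Notation m := (n - k).

Fact le_mc : m <= c. Proof. by rewrite leq_subCl. Qed.
Fact lt_bm : b < m. Proof. lia. Qed.

Local Notation L := (layer n c k (triangle n a b c)).
Local Notation c_ord := (Ordinal lt_cn).
Local Notation le_mn := (leq_subr k n).

Lemma layer_padded f : L f -> padded m c_ord f.
Proof.
move=> [[opf habc] card_c].
have le_fc x : f x <= c by case: (habc x) => [|[]] ->; lia.
pose Pc := [pred x | f x < c].
have downPc (x y : 'I_n) : x <= y -> Pc y -> Pc x by move/opf/leq_ltn_trans; apply.
have card_Pc : #|Pc| = m.
  have := cardC [set x | (f x : nat) == c]; rewrite card_c card_ord.
  rewrite (eq_card (B := Pc)) => [|x]; last by rewrite !inE ltn_neqAle le_fc andbT.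
  by move=> sum_n; apply/eqP; rewrite -(eqn_add2l k) sum_n subnKC //; lia.
move=> x; have := down_closed_ord downPc x; rewrite card_Pc inE /=.
case: (ltnP x m) => _ => [lt_fc | /negbT]; last by rewrite -leqNgt eqn_leq le_fc.
by case: (habc x) => [|[]] fx; move: lt_fc; rewrite fx; lia.
Qed.

Lemma layer_extend h : L (extend c_ord le_mn h) <-> STR m a b h.
Proof.
split=> [[[ope habc] _] | [oph hab]].
  split=> [| y]; first exact: (order_preserving_extend (c := c_ord) le_mc h).1 ope.
  have := habc (widen_ord le_mn y); rewrite extend_widen /=.
  by case=> [|[]] hy; [left | right | have := ltn_ord (h y); have := le_mc; lia].
split; [split=> [| x] |]; first exact: (order_preserving_extend (c := c_ord) le_mc h).2 oph.
  case: (ltnP x m) => [lt_xm | le_mx]; last by rewrite extend_ge //; right; right.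
  have -> : x = widen_ord le_mn (Ordinal lt_xm) by apply: val_inj.
  by rewrite extend_widen /=; case: (hab (Ordinal lt_xm)); [left | right; left].
rewrite (card_padded (c := c_ord) le_mn le_mc (padded_extend le_mn h)) subKn //; lia.
Qed.

Lemma is_abc_extend i h : i <= m ->
  is_abc n a i b (m - i) c (extend c_ord le_mn h) <->
  forall y : 'I_m, (h y : nat) = if y < i then a else b.
Proof.
move=> le_im; rewrite /is_abc subnKC //; split=> [abc_h y | step_h x].
  by have := abc_h (widen_ord le_mn y); rewrite extend_widen /= ltn_ord.
case: (ltnP x m) => [lt_xm | le_mx].
  have -> : x = widen_ord le_mn (Ordinal lt_xm) by apply: val_inj.
  by rewrite extend_widen /= step_h.
by rewrite extend_ge // ltnNge (leq_trans le_im le_mx).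
Qed.

Lemma is_abc_padded i f : i <= m -> is_abc n a i b (m - i) c f -> padded m c_ord f.
Proof.
move=> le_im abc_f x; rewrite abc_f subnKC //; case: (ltnP x m) => [_ | le_mx].
  by case: ifP => _; [exact: ltn_trans lt_ab lt_bm | exact: lt_bm].
by rewrite ltnNge (leq_trans le_im le_mx).
Qed.

Lemma layer_abc f : L f <-> exists i, i <= m /\ is_abc n a i b (m - i) c f.
Proof.
split=> [Lf | [i [le_im abc_f]]].
  have padf := layer_padded _ Lf.
  rewrite -(restrK le_mn padf) in Lf *; rewrite layer_extend in Lf.
  have [i le_im step] := (STR_step _ lt_ab).1 Lf.
  by exists i; split; last exact: (is_abc_extend _ _ le_im).2 step.
have padf := is_abc_padded _ _ le_im abc_f.
rewrite -(restrK le_mn padf) in abc_f *; rewrite layer_extend.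
by apply/(STR_step _ lt_ab); exists i; last exact: (is_abc_extend _ _ le_im).1 abc_f.
Qed.

End Layer.

Theorem proposition30 (n a b c k : nat) :
  3 <= n -> a < b -> b < c -> c < n ->
  n - c <= k -> k <= n - b - 1 ->
  (forall f : Emap n,
     layer n c k (triangle n a b c) f <->
     exists i, i <= n - k /\ is_abc n a i b (n - k - i) c f) /\
  semiring_isomorphic n (n - k) (layer n c k (triangle n a b c)) (STR (n - k) a b).
Proof.
move=> _ lt_ab lt_bc lt_cn le_k lt_k; split=> [f | ]; first exact: layer_abc.
exists (restr (leq_subr k n)).
apply: (@restr_semiring_iso _ _ (Ordinal lt_cn)) => [| f | h].
- by rewrite /= leq_subCl.
- exact: layer_padded.
- exact: layer_extend.
Qed.
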